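(* Let $S$ and $Z$ be finite nonempty alphabets with $\#Z\le\#S$, let $\tau:S\to Z$ be surjective, and let $\sigma_\tau:\Sigma\to\Sigma$ be the associated full zip shift map. Then $\sigma_\tau$ is transitive (there exists $x\in\Sigma$ whose forward orbit $\{\sigma_\tau^n(x):n\ge0\}$ is dense in $\Sigma$) and pre-transitive (there exists $x\in\Sigma$ such that $\bigcup_{n\ge0}\sigma_\tau^{-n}(x)$ is dense in $\Sigma$).
   Context: The zip shift space $\Sigma=\Sigma_{Z,S}$ is the set of bi-infinite sequences $x=(x_i)_{i\in\mathbb{Z}}$ with $x_i\in S$ for $i\ge0$ and $x_i\in Z$ for $i<0$, with metric $d(x,y)=2^{-M(x,y)}$, $M(x,y)=\min\{|i|:x_i\neq y_i\}$. The zip shift map is defined by $(\sigma_\tau x)_i=x_{i+1}$ for $i\neq-1$ and $(\sigma_\tau x)_{-1}=\tau(x_0)$. Here $\sigma_\tau^{-n}(x)$ denotes the set of all $y\in\Sigma$ with $\sigma_\tau^n(y)=x$. *)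

From mathcomp Require Import all_boot.
From Stdlib Require Import Reals ZArith.
Set Implicit Arguments.
Unset Strict Implicit.
Unset Printing Implicit Defensive.

(* A point of the zip shift space Sigma_{Z,S}:
   x_i = pos i  (i >= 0, in S),   x_{-(k+1)} = neg k  (k >= 0, in A = the alphabet Z). *)
Record zseq (S A : Type) := ZSeq { pos : nat -> S ; neg : nat -> A }.

Definition coord (S A : Type) (x : zseq S A) (i : Z) : S + A :=
  if (0 <=? i)%Z then inl (pos x (Z.to_nat i))
  else inr (neg x (Z.to_nat (- i - 1))).

(* zip shift: (sigma x)_i = x_{i+1} for i <> -1, (sigma x)_{-1} = tau x_0 *)
Definition zip_shift (S A : Type) (tau : S -> A) (x : zseq S A) : zseq S A :=
  ZSeq (fun n => pos x n.+1)
       (fun k => match k with 0 => tau (pos x 0) | k'.+1 => neg x k' end).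

(* d(x,y) < eps, with d(x,y) = 2^{-M(x,y)}, M(x,y) = min{|i| : x_i <> y_i}.
   Since 2^{-|i|} is maximal at the minimal |i|, d(x,y) < eps iff every
   index i where x and y differ satisfies 2^{-|i|} < eps (d(x,x)=0). *)
Definition dist_lt (S A : Type) (x y : zseq S A) (eps : R) : Prop :=
  forall i : Z, coord x i <> coord y i -> ((/ 2) ^ (Z.abs_nat i) < eps)%R.

Definition dense_in (S A : Type) (P : zseq S A -> Prop) : Prop :=
  forall (y : zseq S A) (eps : R), (0 < eps)%R ->
    exists x, P x /\ dist_lt x y eps.

Definition forward_orbit (S A : Type) (tau : S -> A) (x : zseq S A) :
  zseq S A -> Prop :=
  fun y => exists n : nat, y = ssrnat.iter n (zip_shift tau) x.

Definition backward_orbit (S A : Type) (tau : S -> A) (x : zseq S A) :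
  zseq S A -> Prop :=
  fun y => exists n : nat, ssrnat.iter n (zip_shift tau) y = x.

Definition zip_transitive (S A : Type) (tau : S -> A) : Prop :=
  exists x : zseq S A, dense_in (forward_orbit tau x).

Definition zip_pre_transitive (S A : Type) (tau : S -> A) : Prop :=
  exists x : zseq S A, dense_in (backward_orbit tau x).

(* Over any countable alphabet there is a one-sided sequence containing every
   finite word: concatenate an enumeration of all words.  Since sigma_tau^n x
   reads x_n, x_(n+1), ... to the right of 0 and tau(x_(n-1)), tau(x_(n-2)), ...
   to the left, the point whose nonnegative half is such a sequence over S has a
   dense orbit: a block of tau-preimages of y_(-N), ..., y_(-1) followed by
   y_0, ..., y_(N-1) brings some sigma_tau^n x within 2^(-N) of y.  Dually, let
   the negative half of x be universal over Z.  A point z with sigma_tau^n z = x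
   may take arbitrary values y_0, ..., y_(N-1) at its first coordinates as long
   as x carries their tau-images at positions -n, ..., -n+N-1, and its negative
   half is that of x shifted by n; so z is close to y as soon as x also carries
   y_(-N), ..., y_(-1) right before, which happens for some n by universality. *)

From Stdlib Require Import Reals Lra Lia ZArith FunctionalExtensionality.
From mathcomp Require Import all_boot zify.
Set Implicit Arguments.
Unset Strict Implicit.

Section UniversalSequence.
Variables (T : countType) (d : T).

(* The leading [d] makes every block nonempty, so [blocks n.+1] has more than
   [n] letters. *)
Definition block k : seq T := d :: odflt [::] (unpickle k).
Definition blocks m : seq T := flatten (map block (iota 0 m)).
Definition universal_seq n : T := nth d (blocks n.+1) n.

Lemma blocksS m : blocks m.+1 = blocks m ++ block m.
Proof. by rewrite /blocks -addn1 iotaD map_cat flatten_cat /= cats0. Qed.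

Lemma leq_size_blocks m : m <= size (blocks m).
Proof.
elim: m => [|m IHm] //; rewrite blocksS size_cat /= addnS ltnS.
exact: leq_trans IHm (leq_addr _ _).
Qed.

Lemma blocks_prefix m k : exists r, blocks (m + k) = blocks m ++ r.
Proof.
elim: k => [|k [r IHk]]; first by exists [::]; rewrite addn0 cats0.
by exists (r ++ block (m + k)); rewrite addnS blocksS IHk catA.
Qed.

Lemma nth_blocks_mono m1 m2 j : m1 <= m2 -> j < size (blocks m1) ->
  nth d (blocks m1) j = nth d (blocks m2) j.
Proof.
move=> /subnKC <- lt_j; have [r ->] := blocks_prefix m1 (m2 - m1).
by rewrite nth_cat lt_j.
Qed.

Lemma universal_seq_blocks m j : j < size (blocks m) ->
  universal_seq j = nth d (blocks m) j.
Proof.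
move=> lt_j; have lt_j' : j < size (blocks j.+1) by exact: leq_size_blocks.
rewrite /universal_seq; case: (leqP m j.+1) => [le_m | /ltnW le_j].
  exact/esym/nth_blocks_mono.
exact: nth_blocks_mono.
Qed.

Lemma universal_seq_word w :
  exists m, forall i, i < size w -> universal_seq (m + i) = nth d w i.
Proof.
have blockK : block (pickle w) = d :: w by rewrite /block pickleK.
exists (size (blocks (pickle w))).+1 => i lt_i.
rewrite (@universal_seq_blocks (pickle w).+1); last first.
  by rewrite blocksS size_cat blockK /= addSn -addnS ltn_add2l.
by rewrite blocksS addSn -addnS nth_cat ltnNge leq_addr /= addKn blockK.
Qed.

Lemma universal_seq_window (l r : nat -> T) N : exists n, N <= n /\
  forall k, k < N -> universal_seq (n.-1 - k) = l k /\ universal_seq (n + k) = r k.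
Proof.
pose w := mkseq (fun i => if i < N then l (N.-1 - i) else r (i - N)) (N + N).
have [m Hm] := universal_seq_word w.
have Hw i : i < N + N -> universal_seq (m + i) = nth d w i.
  by move=> lt_i; rewrite Hm // size_mkseq.
exists (m + N); split=> [|k lt_k]; first exact: leq_addl.
have -> : (m + N).-1 - k = m + (N.-1 - k) by lia.
rewrite -addnA !Hw ?nth_mkseq; try lia.
by split; [rewrite ifT; [congr l | ] | rewrite ifF; [congr r | ]]; lia.
Qed.

End UniversalSequence.

Section ZipShift.
Variables (S A : Type) (tau : S -> A).

Definition agree_upto N (x y : zseq S A) : Prop :=
  forall k, k < N -> pos x k = pos y k /\ neg x k = neg y k.

Lemma agree_upto_coord N x y i :
  agree_upto N x y -> coord x i <> coord y i -> N <= Z.abs_nat i.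
Proof.
rewrite /coord => xy; case: (Z.leb_spec 0 i) => [ge0 | lt0] neq_i.
  case: (ltnP (Z.to_nat i) N) => [/xy [eq_i _] | ]; first by rewrite eq_i in neq_i.
  by move=> /leP; lia.
case: (ltnP (Z.to_nat (- i - 1)) N) => [/xy [_ eq_i] | ]; first by rewrite eq_i in neq_i.
by move=> /leP; lia.
Qed.

Lemma agree_upto_dist_lt (eps : R) : Rlt 0 eps ->
  exists N, forall x y, agree_upto N x y -> dist_lt x y eps.
Proof.
move=> eps_gt0; have [|N HN] := pow_lt_1_zero (Rinv 2) _ eps eps_gt0.
  by rewrite Rabs_right; lra.
exists N => x y xy i /(agree_upto_coord xy) /leP le_N.
have := HN _ le_N; rewrite Rabs_right //; apply/Rle_ge/pow_le; lra.
Qed.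

Lemma dense_in_agree_upto (P : zseq S A -> Prop) :
  (forall y N, exists x, P x /\ agree_upto N x y) -> dense_in P.
Proof.
move=> HP y eps /agree_upto_dist_lt [N HN].
by have [x [Px xy]] := HP y N; exists x; split; last exact: HN.
Qed.

Lemma zseq_ext (x y : zseq S A) : pos x =1 pos y -> neg x =1 neg y -> x = y.
Proof.
by case: x y => [px nx] [py ny] /= /functional_extensionality ->
  /functional_extensionality ->.
Qed.

Lemma iter_zip_shift_pos n x k :
  pos (iter n (zip_shift tau) x) k = pos x (n + k).
Proof. by elim: n k => [|n IHn] k //=; rewrite IHn addSnnS. Qed.

Lemma iter_zip_shift_neg n x k :
  neg (iter n (zip_shift tau) x) k =
  if k < n then tau (pos x (n.-1 - k)) else neg x (k - n).
Proof.
elim: n k => [|n IHn] [|k] /=; rewrite ?subn0 ?iter_zip_shift_pos ?IHn //.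
  by congr (tau (pos x _)); lia.
by rewrite ltnS; case: ifP => // _; congr (tau (pos x _)); lia.
Qed.

Lemma iter_zip_shift_agree_upto x y N n : N <= n ->
  (forall k, k < N -> tau (pos x (n.-1 - k)) = neg y k /\ pos x (n + k) = pos y k) ->
  agree_upto N (iter n (zip_shift tau) x) y.
Proof.
move=> le_Nn Hx k lt_k; have [eq_neg eq_pos] := Hx k lt_k.
rewrite iter_zip_shift_pos iter_zip_shift_neg eq_pos ifT //.
exact: leq_trans lt_k le_Nn.
Qed.

Variables (g : A -> S) (tauK : cancel g tau).

(* A preimage under [sigma_tau^n] is constrained at its first [n] coordinates
   only through their [tau]-images; [g] fills those outside the window. *)
Lemma iter_zip_shift_preimage x y N n : N <= n ->
  (forall k, k < N -> neg x (n.-1 - k) = tau (pos y k) /\ neg x (n + k) = neg y k) ->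
  exists z, iter n (zip_shift tau) z = x /\ agree_upto N z y.
Proof.
move=> le_Nn Hx.
pose z := ZSeq (fun k => if k < N then pos y k
                         else if k < n then g (neg x (n.-1 - k)) else pos x (k - n))
               (fun k => neg x (n + k)).
exists z; split=> [|k /[dup] lt_k /Hx [_ eq_neg]]; last by rewrite /= lt_k.
apply: zseq_ext => k; rewrite ?iter_zip_shift_pos ?iter_zip_shift_neg /=.
  by rewrite ifF ?ifF ?addKn //; lia.
case: ltnP => [lt_k | le_k]; last by congr (neg x _); lia.
case: ifP => [lt_N | _]; last by rewrite ifT ?tauK; [congr (neg x _) | ]; lia.
by have [<- _] := Hx _ lt_N; congr (neg x _); lia.
Qed.

End ZipShift.

Theorem theorem2 (S A : finType) (tau : S -> A)
  (hS : 0 < #|S|) (hZ : 0 < #|A|) (hZS : #|A| <= #|S|)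
  (htau : forall z : A, exists s : S, tau s = z) :
  zip_transitive tau /\ zip_pre_transitive tau.
Proof.
(* [hZ] and [hZS] follow from [hS] and the surjectivity of [tau]. *)
have [s0 _] := card_gt0P hS.
have [g tauK] := fin_all_exists htau.
split.
- exists (ZSeq (universal_seq s0) (fun=> tau s0)).
  apply: dense_in_agree_upto => y N.
  have [n [le_Nn Hn]] := universal_seq_window s0 (g \o neg y) (pos y) N.
  exists (iter n (zip_shift tau) (ZSeq (universal_seq s0) (fun=> tau s0))).
  split; first by exists n.
  by apply: iter_zip_shift_agree_upto => // k /Hn [/= -> ->].
- exists (ZSeq (fun=> s0) (universal_seq (tau s0))).
  apply: dense_in_agree_upto => y N.
  have [n [le_Nn Hn]] := universal_seq_window (tau s0) (tau \o pos y) (neg y) N.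
  have [z [zn zy]] := iter_zip_shift_preimage tauK
    (x := ZSeq (fun=> s0) (universal_seq (tau s0))) le_Nn Hn.
  by exists z; split; first exists n.
Qed.
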